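(* The octonionic hyperbolic plane $\mathbb OH^2=\{(u,v)\in\mathbb O^2:|u|^2+|v|^2<1\}$, equipped with the symmetric bilinear form whose quadratic form on tangent vectors $(du,dv)=(\xi,\eta)$ is $$ds^2=\frac{|\xi|^2(1-|v|^2)+|\eta|^2(1-|u|^2)+2\mathrm{Re}\big[(u\bar v)(\eta\bar\xi)\big]}{(1-|u|^2-|v|^2)^2},$$ is a $16$-dimensional simply connected Riemannian manifold (in particular this form is positive definite at every point).
   Context: Octonions $\mathbb O=\mathbb H\oplus\mathbb H$ with product $(q_1,q_2)(p_1,p_2)=(q_1p_1-\bar p_2q_2,\ p_2q_1+q_2\bar p_1)$, conjugation $\overline{(q_1,q_2)}=(\bar q_1,-q_2)$, $\langle a,b\rangle=\mathrm{Re}(a\bar b)$, $|a|^2=\langle a,a\rangle$; $\mathbb O^2$ is identified with $\mathbb R^{16}$. *)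

From HB Require Import structures.
From mathcomp Require Import all_boot all_order all_algebra.
From mathcomp Require Import all_classical all_reals all_analysis.
Set Implicit Arguments. Unset Strict Implicit. Unset Printing Implicit Defensive.
Import Order.TTheory GRing.Theory Num.Theory.
Import numFieldNormedType.Exports.
Local Open Scope classical_set_scope.
Local Open Scope ring_scope.

Section Octonions.
Variable R : realType.

(** Quaternions H = R^4, components (a, b, c, d) for a + b i + c j + d k. *)
Record quat := Quat { qa : R; qb : R; qc : R; qd : R }.

Definition qadd (x y : quat) :=
  Quat (qa x + qa y) (qb x + qb y) (qc x + qc y) (qd x + qd y).
Definition qopp (x : quat) := Quat (- qa x) (- qb x) (- qc x) (- qd x).
Definition qsub (x y : quat) := qadd x (qopp y).
Definition qmul (x y : quat) :=
  Quat (qa x * qa y - qb x * qb y - qc x * qc y - qd x * qd y)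
       (qa x * qb y + qb x * qa y + qc x * qd y - qd x * qc y)
       (qa x * qc y - qb x * qd y + qc x * qa y + qd x * qb y)
       (qa x * qd y + qb x * qc y - qc x * qb y + qd x * qa y).
Definition qconj (x : quat) := Quat (qa x) (- qb x) (- qc x) (- qd x).

(** Octonions O = H (+) H (Cayley-Dickson) *)
Record oct := Oct { o1 : quat; o2 : quat }.

Definition oadd (x y : oct) := Oct (qadd (o1 x) (o1 y)) (qadd (o2 x) (o2 y)).
Definition omul (x y : oct) :=
  Oct (qsub (qmul (o1 x) (o1 y)) (qmul (qconj (o2 y)) (o2 x)))
      (qadd (qmul (o2 y) (o1 x)) (qmul (o2 x) (qconj (o1 y)))).
Definition oconj (x : oct) := Oct (qconj (o1 x)) (qopp (o2 x)).
Definition oRe (x : oct) : R := qa (o1 x).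
Definition oinner (x y : oct) : R := oRe (omul x (oconj y)).
Definition onorm2 (x : oct) : R := oinner x x.

(** Identification of O^2 with R^16: coordinates 0..7 give u, 8..15 give v. *)
Definition coord (p : 'rV[R]_16) (k : nat) : R := p ord0 (inord k).
Definition oct_at (p : 'rV[R]_16) (k : nat) : oct :=
  Oct (Quat (coord p k) (coord p (k + 1)) (coord p (k + 2)) (coord p (k + 3)))
      (Quat (coord p (k + 4)) (coord p (k + 5)) (coord p (k + 6)) (coord p (k + 7))).
Definition ucomp (p : 'rV[R]_16) : oct := oct_at p 0.
Definition vcomp (p : 'rV[R]_16) : oct := oct_at p 8.

Definition OH2 : set 'rV[R]_16 :=
  [set p | onorm2 (ucomp p) + onorm2 (vcomp p) < 1].

Definition ds2 (p X : 'rV[R]_16) : R :=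
  let u := ucomp p in let v := vcomp p in
  let xi := ucomp X in let eta := vcomp X in
  (onorm2 xi * (1 - onorm2 v) + onorm2 eta * (1 - onorm2 u)
   + 2 * oRe (omul (omul u (oconj v)) (omul eta (oconj xi))))
  / (1 - onorm2 u - onorm2 v) ^+ 2.

Definition gOH (p X Y : 'rV[R]_16) : R :=
  (ds2 p (X + Y) - ds2 p X - ds2 p Y) / 2.

End Octonions.

Section Geometry.
Variable R : realType.
Local Notation V := 'rV[R]_16.

Definition unit_interval : set R := [set t | 0 <= t <= 1].

Fixpoint iter_dir (vs : seq V) (f : V -> R) : V -> R :=
  match vs with
  | [::] => f
  | v :: vs' => fun x => 'D_v (iter_dir vs' f) x
  end.

Definition smooth_on (U : set V) (f : V -> R) :=
  forall (vs : seq V) (x : V), U x -> differentiable (iter_dir vs f) x.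

Definition path_connected (S : set V) :=
  forall x y, S x -> S y ->
    exists g : R -> V, {within unit_interval, continuous g} /\
      g @` unit_interval `<=` S /\ g 0 = x /\ g 1 = y.

Definition simply_connected (S : set V) :=
  S !=set0 /\ path_connected S /\
  forall f : R -> V,
    {within unit_interval, continuous f} -> f @` unit_interval `<=` S ->
    f 0 = f 1 ->
    exists H : R * R -> V,
      {within unit_interval `*` unit_interval, continuous H} /\
      H @` (unit_interval `*` unit_interval) `<=` S /\
      (forall s, unit_interval s -> H (s, 0) = f s /\ H (s, 1) = f 0) /\
      (forall t, unit_interval t -> H (0, t) = f 0 /\ H (1, t) = f 0).

Definition ebasis (i : 'I_16) : V := \row_(j < 16) (i == j)%:R.

End Geometry.

From Pilot Require Import Defs.
From HB Require Import structures.
From mathcomp Require Import all_boot all_order all_algebra.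
From mathcomp Require Import all_classical all_reals all_analysis.
From mathcomp Require Import ring lra.
Import Order.TTheory GRing.Theory Num.Theory.
Import numFieldNormedType.Exports.
Local Open Scope classical_set_scope.
Local Open Scope ring_scope.

(* Octonion multiplication is norm-multiplicative, so
   |Re[(u v̄)(η ξ̄)]| <= |u| |v| |ξ| |η|, and the numerator of ds^2 is bounded
   below by the quadratic form in (|ξ|, |η|) with matrix
   [[1 - |v|^2, -|u||v|], [-|u||v|, 1 - |u|^2]], whose determinant
   1 - |u|^2 - |v|^2 is positive on OH^2.  Since |u|^2 + |v|^2 is the squared
   Euclidean norm of R^16, OH^2 is the open unit ball: it is open and convex,
   hence simply connected by straight-line homotopies.  Finally the metric
   coefficients are rational functions of the coordinates whose denominator
   does not vanish on OH^2, and such functions are smooth. *)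

Ltac oct_unfold :=
  cbn [qa qb qc qd o1 o2 qadd qopp qsub qmul qconj oadd omul oconj oRe oinner onorm2
       ucomp vcomp oct_at].

Ltac oct_ring :=
  repeat match goal with x : oct _ |- _ => destruct x as [[] []] end;
  oct_unfold; ring.

Lemma binary_form_gt0 (R : realFieldType) (U W a b r : R) :
  0 <= U -> 0 <= W -> U + W < 1 -> 0 <= a -> 0 <= b -> 0 < a + b ->
  r ^+ 2 <= U * W * (a * b) -> 0 < a * (1 - W) + b * (1 - U) + 2 * r.
Proof.
move=> U0 W0 UW1 a0 b0 ab0 r2.
have diag_gt0 : 0 < a * (1 - W) + b * (1 - U) by nra.
rewrite ltNge; apply/negP => le0.
have diag2_le : (a * (1 - W) + b * (1 - U)) ^+ 2 <= 4 * r ^+ 2 by nra.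
have amgm : 4 * (a * b) * ((1 - U) * (1 - W)) <= (a * (1 - W) + b * (1 - U)) ^+ 2.
  by have := sqr_ge0 (a * (1 - W) - b * (1 - U)); nra.
have ab_eq0 : a * b = 0 by nra.
have r_eq0 : r = 0 by nra.
by move: le0; rewrite r_eq0; lra.
Qed.

Section SquaredNorm.
Context {R : realType} {n : nat}.
Implicit Types X Y : 'rV[R]_n.

Definition sqnorm X : R := \sum_i X ord0 i ^+ 2.

Lemma sqnorm_gt0 X : X != 0 -> 0 < sqnorm X.
Proof.
move=> X0; rewrite lt_def sumr_ge0 ?andbT => [|i _]; last exact: sqr_ge0.
apply: contra X0 => /eqP /psumr_eq0P X2_eq0; apply/eqP/rowP => j.
rewrite mxE; apply/eqP; rewrite -sqrf_eq0 X2_eq0 // => i _.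
exact: sqr_ge0.
Qed.

Lemma sqnorm_convex X Y t : 0 <= t <= 1 ->
  sqnorm ((1 - t) *: X + t *: Y) <= (1 - t) * sqnorm X + t * sqnorm Y.
Proof.
move=> /andP[t0 t1]; rewrite /sqnorm !mulr_sumr -big_split /=.
apply: ler_sum => i _; rewrite !mxE -subr_ge0.
set x := X ord0 i; set y := Y ord0 i.
have -> : (1 - t) * x ^+ 2 + t * y ^+ 2 - ((1 - t) * x + t * y) ^+ 2
          = t * (1 - t) * (x - y) ^+ 2 by ring.
by rewrite mulr_ge0 ?sqr_ge0 // mulr_ge0 // subr_ge0.
Qed.

Lemma sqnorm_continuous : continuous sqnorm.
Proof.
apply: continuous_big => [|i _ X]; first exact: add_continuous.
exact: continuous_comp (@coord_continuous R 1 n ord0 i X) (@exprn_continuous R 2 _).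
Qed.

End SquaredNorm.

Section OctonionAlgebra.
Context {R : realType}.
Implicit Types (a : R) (x y z A : oct R).

Definition oscale a x :=
  Oct (Quat (a * qa (o1 x)) (a * qb (o1 x)) (a * qc (o1 x)) (a * qd (o1 x)))
      (Quat (a * qa (o2 x)) (a * qb (o2 x)) (a * qc (o2 x)) (a * qd (o2 x))).

Lemma onorm2E (x0 x1 x2 x3 x4 x5 x6 x7 : R) :
  onorm2 (Oct (Quat x0 x1 x2 x3) (Quat x4 x5 x6 x7)) =
  x0 ^+ 2 + x1 ^+ 2 + x2 ^+ 2 + x3 ^+ 2 + x4 ^+ 2 + x5 ^+ 2 + x6 ^+ 2 + x7 ^+ 2.
Proof. oct_ring. Qed.

Lemma onorm2_ge0 x : 0 <= onorm2 x.
Proof. by case: x => [[? ? ? ?] [? ? ? ?]]; rewrite onorm2E !addr_ge0 ?sqr_ge0. Qed.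

Lemma oRe_sqr_le x : oRe x ^+ 2 <= onorm2 x.
Proof.
case: x => [[? ? ? ?] [? ? ? ?]]; rewrite onorm2E -!addrA lerDl.
by rewrite !addr_ge0 ?sqr_ge0.
Qed.

Lemma onorm2M x y : onorm2 (omul x y) = onorm2 x * onorm2 y.
Proof. oct_ring. Qed.

Lemma onorm2_conj x : onorm2 (oconj x) = onorm2 x.
Proof. oct_ring. Qed.

Lemma oRe_mul_sqr_le x y : oRe (omul x y) ^+ 2 <= onorm2 x * onorm2 y.
Proof. by rewrite -onorm2M oRe_sqr_le. Qed.

Lemma oinnerC x y : oinner x y = oinner y x.
Proof. oct_ring. Qed.

Lemma oinnerZDl a x y z : oinner (oadd (oscale a x) y) z = a * oinner x z + oinner y z.
Proof. rewrite /oscale; oct_ring. Qed.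

Definition twisted_inner A x y := oRe (omul A (omul x (oconj y))).

Lemma twisted_innerZDl a A x y z :
  twisted_inner A (oadd (oscale a x) y) z = a * twisted_inner A x z + twisted_inner A y z.
Proof. rewrite /twisted_inner /oscale; oct_ring. Qed.

Lemma twisted_innerZDr a A x y z :
  twisted_inner A z (oadd (oscale a x) y) = a * twisted_inner A z x + twisted_inner A z y.
Proof. rewrite /twisted_inner /oscale; oct_ring. Qed.

End OctonionAlgebra.

Section OctonionPlane.
Context {R : realType}.
Implicit Types (a t : R) (p x y X Y Z : 'rV[R]_16).

Lemma ucompE X : ucomp X =
  Oct (Quat (Defs.coord X 0) (Defs.coord X 1) (Defs.coord X 2) (Defs.coord X 3))
      (Quat (Defs.coord X 4) (Defs.coord X 5) (Defs.coord X 6) (Defs.coord X 7)).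
Proof. by []. Qed.

Lemma vcompE X : vcomp X =
  Oct (Quat (Defs.coord X 8) (Defs.coord X 9) (Defs.coord X 10) (Defs.coord X 11))
      (Quat (Defs.coord X 12) (Defs.coord X 13) (Defs.coord X 14) (Defs.coord X 15)).
Proof. by []. Qed.

Lemma ucompZD a X Y : ucomp (a *: X + Y) = oadd (oscale a (ucomp X)) (ucomp Y).
Proof. by rewrite /ucomp /oct_at /Defs.coord !mxE. Qed.

Lemma vcompZD a X Y : vcomp (a *: X + Y) = oadd (oscale a (vcomp X)) (vcomp Y).
Proof. by rewrite /vcomp /oct_at /Defs.coord !mxE. Qed.

Lemma onorm2_uv X : onorm2 (ucomp X) + onorm2 (vcomp X) = sqnorm X.
Proof.
rewrite /sqnorm (eq_bigr (fun i : 'I_16 => Defs.coord X i ^+ 2)) => [|i _]; last first.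
  by rewrite /Defs.coord inord_val.
rewrite -(big_mkord xpredT (fun k => Defs.coord X k ^+ 2)) /index_iota /=.
by rewrite !big_cons big_nil ucompE vcompE !onorm2E; ring.
Qed.

Lemma OH2E : @OH2 R = [set p | sqnorm p < 1].
Proof. by apply/funext => p; rewrite /OH2 /= onorm2_uv. Qed.

Lemma OH2_0 : @OH2 R 0.
Proof. by rewrite OH2E /= /sqnorm big1 ?ltr01 // => i _; rewrite mxE expr0n. Qed.

Lemma OH2_open : open (@OH2 R).
Proof.
rewrite OH2E; apply: (@open_comp _ _ sqnorm [set r | r < 1]) => [x _|].
  exact: sqnorm_continuous.
exact: open_lt.
Qed.

Lemma OH2_convex x y t : @OH2 R x -> @OH2 R y -> 0 <= t <= 1 ->
  @OH2 R ((1 - t) *: x + t *: y).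
Proof.
rewrite OH2E /= => x_in y_in t01; have := sqnorm_convex x y t t01.
set m := Num.max (sqnorm x) (sqnorm y).
have [xm ym] : sqnorm x <= m /\ sqnorm y <= m by rewrite !le_max !lexx orbT.
have m_lt1 : m < 1 by rewrite gt_max x_in y_in.
by case/andP: t01 => t0 t1; nra.
Qed.

Definition oh2_form p X Y : R :=
  (oinner (ucomp X) (ucomp Y) * (1 - onorm2 (vcomp p))
   + oinner (vcomp X) (vcomp Y) * (1 - onorm2 (ucomp p))
   + twisted_inner (omul (ucomp p) (oconj (vcomp p))) (vcomp X) (ucomp Y)
   + twisted_inner (omul (ucomp p) (oconj (vcomp p))) (vcomp Y) (ucomp X))
  / (1 - onorm2 (ucomp p) - onorm2 (vcomp p)) ^+ 2.

Lemma ds2_oh2_form p X : ds2 p X = oh2_form p X X.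
Proof. by rewrite /ds2 /oh2_form /twisted_inner /onorm2 /=; ring. Qed.

Lemma oh2_formC p X Y : oh2_form p X Y = oh2_form p Y X.
Proof. by rewrite /oh2_form [oinner (ucomp X) _]oinnerC [oinner (vcomp X) _]oinnerC; ring. Qed.

Lemma oh2_formZDl p a X Y Z :
  oh2_form p (a *: X + Y) Z = a * oh2_form p X Z + oh2_form p Y Z.
Proof.
by rewrite /oh2_form ucompZD vcompZD !oinnerZDl twisted_innerZDl twisted_innerZDr; ring.
Qed.

Lemma oh2_formDl p X Y Z : oh2_form p (X + Y) Z = oh2_form p X Z + oh2_form p Y Z.
Proof. by have := oh2_formZDl p 1 X Y Z; rewrite scale1r mul1r. Qed.

Lemma gOH_oh2_form p X Y : gOH p X Y = oh2_form p X Y.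
Proof.
rewrite /gOH !ds2_oh2_form oh2_formDl ![oh2_form _ _ (X + Y)]oh2_formC !oh2_formDl.
by rewrite (oh2_formC p Y X); field.
Qed.

Lemma ds2_gt0 p X : @OH2 R p -> X != 0 -> 0 < ds2 p X.
Proof.
rewrite /OH2 /ds2 /= => p_in X0.
have den_gt0 : 0 < (1 - onorm2 (ucomp p) - onorm2 (vcomp p)) ^+ 2.
  by apply: exprn_gt0; lra.
apply: divr_gt0 => //; apply: binary_form_gt0; rewrite ?onorm2_ge0 //.
  by rewrite onorm2_uv sqnorm_gt0.
apply: le_trans (oRe_mul_sqr_le _ _) _.
by rewrite !onorm2M !onorm2_conj [onorm2 (vcomp X) * _]mulrC.
Qed.

End OctonionPlane.

Section LocalDifferentiability.
Context {K : numFieldType} {V W : normedModType K}.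

Lemma near0_differentiable (h : V -> W) x :
  (\forall y \near x, h y = 0) -> differentiable h x.
Proof.
move=> h0; have hx0 : h x = 0 := nbhs_singleton h0.
have h_shift : h \o shift x = cst (h x) + \0 +o_ 0 id.
  apply/eqaddoP => _/posnumP[e].
  have : \forall k \near (0 : V), h (k + x) = 0.
    rewrite (near_shift x) /=; near=> y => /=; rewrite sub0r addrNK; near: y; exact: h0.
  apply: filterS => k hk.
  change (`|h (k + x) - (h x + 0)| <= e%:num * `|k|).
  by rewrite hk hx0 !addr0 subr0 normr0 mulr_ge0.
apply/diff_locallyP; rewrite (diff_unique _ h_shift); last exact: cst_continuous.
by split; [exact: cst_continuous | exact: h_shift].
Unshelve. all: by end_near. Qed.

Lemma near_eq_differentiable (f g : V -> W) x :
  (\forall y \near x, f y = g y) -> differentiable f x -> differentiable g x.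
Proof.
move=> fg df.
have -> : g = f + (g - f) by apply/funext => y; rewrite !fctE addrC subrK.
apply: differentiableD => //; apply: near0_differentiable.
by apply: filterS fg => y fy; rewrite !fctE fy subrr.
Qed.

End LocalDifferentiability.

Lemma derive_mxentry (K : numFieldType) m n i j (M v : 'M[K]_(m, n)) :
  'D_v (fun N : 'M[K]_(m, n) => N i j) M = v i j.
Proof.
have @f : {linear 'M[K]_(m, n) -> K}.
  by exists (fun N : 'M[K]_(m, n) => N i j); do 2![eexists]; do ?[constructor];
     rewrite ?mxE// => ? *; rewrite ?mxE//; move=> ?; rewrite !mxE.
rewrite (_ : (fun _ => _) = f) // deriveE; last exact/linear_differentiable/coord_continuous.
by rewrite diff_lin //; exact: coord_continuous.
Qed.

Section RationalFunctions.
Context {R : realType} {n : nat}.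
Local Notation V := 'rV[R]_n.

Inductive rational_on (U : set V) : (V -> R) -> Prop :=
| rational_cst c : rational_on U (fun _ => c)
| rational_entry j : rational_on U (fun p => p ord0 j)
| rational_add f g : rational_on U f -> rational_on U g -> rational_on U (fun p => f p + g p)
| rational_opp f : rational_on U f -> rational_on U (fun p => - f p)
| rational_mul f g : rational_on U f -> rational_on U g -> rational_on U (fun p => f p * g p)
| rational_inv f : rational_on U f -> (forall x, U x -> f x != 0) ->
    rational_on U (fun p => (f p)^-1).

Lemma rational_on_differentiable {U f x} : rational_on U f -> U x -> differentiable f x.
Proof.
move=> rf Ux; elim: rf => {f}.
- by move=> c; exact: differentiable_cst.
- by move=> j; exact: differentiable_coord.
- by move=> f g _ df _ dg; exact: differentiableD.
- by move=> f _ df; exact: differentiableN.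
- by move=> f g _ df _ dg; exact: differentiableM.
- by move=> f _ df f_neq0; exact: differentiableV (f_neq0 x Ux).
Qed.

Lemma rational_on_derive {U f} v : rational_on U f ->
  exists2 g, rational_on U g & forall x, U x -> 'D_v f x = g x.
Proof.
have Dd h x : rational_on U h -> U x -> derivable h x v.
  by move=> rh Ux; exact/diff_derivable/(rational_on_differentiable rh Ux).
elim=> {f}.
- by move=> c; exists (fun _ => 0) => [|x _]; [exact: rational_cst | exact: derive_cst].
- move=> j; exists (fun _ => v ord0 j) => [|x _]; first exact: rational_cst.
  exact: derive_mxentry.
- move=> f g rf [F rF DF] rg [G rG DG]; exists (fun p => F p + G p) => [|x Ux].
    exact: rational_add.
  by rewrite -DF // -DG // -(deriveD (Dd _ _ rf Ux) (Dd _ _ rg Ux)).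
- move=> f rf [F rF DF]; exists (fun p => - F p) => [|x Ux]; first exact: rational_opp.
  by rewrite -DF // -(deriveN (Dd _ _ rf Ux)).
- move=> f g rf [F rF DF] rg [G rG DG].
  exists (fun p => f p * G p + g p * F p) => [|x Ux].
    by apply: rational_add; apply: rational_mul.
  by rewrite -DF // -DG // -(deriveM (Dd _ _ rf Ux) (Dd _ _ rg Ux)).
- move=> f rf [F rF DF] f_neq0.
  exists (fun p => - ((f p)^-1 * (f p)^-1) * F p) => [|x Ux].
    by apply: rational_mul => //; apply: rational_opp; apply: rational_mul; apply: rational_inv.
  by rewrite -DF // (deriveV (f_neq0 x Ux) (Dd _ _ rf Ux)) expr2 invfM.
Qed.

End RationalFunctions.

Ltac solve_rational_on :=
  match goal with
  | |- rational_on _ (fun _ => ?c) => apply: rational_cst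
  | |- rational_on _ (fun p => Defs.coord p _) => apply: rational_entry
  | |- rational_on _ (fun p => @?f p + @?g p) =>
      apply: (@rational_add _ _ _ f g); solve_rational_on
  | |- rational_on _ (fun p => - @?f p) => apply: (@rational_opp _ _ _ f); solve_rational_on
  | |- rational_on _ (fun p => @?f p * @?g p) =>
      apply: (@rational_mul _ _ _ f g); solve_rational_on
  | |- rational_on _ (fun p => @?f p ^+ 2) =>
      apply: (@rational_mul _ _ _ f f); solve_rational_on
  end.

Section SmoothMetric.
Context {R : realType}.
Local Notation V := 'rV[R]_16.

(* A derivative of [f] agrees with a rational function only on [U], so [U]
   must be open for the next derivative to see the same function. *)
Lemma rational_on_iter_dir {U : set V} {f} vs : open U -> rational_on U f ->
  exists2 g, rational_on U g & forall x, U x -> iter_dir vs f x = g x.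
Proof.
move=> oU rf; elim: vs => [|v vs [g rg Dg]]; first by exists f.
have [G rG DG] := rational_on_derive v rg.
exists G => // x Ux /=; rewrite -DG //; apply: near_eq_derive.
by apply: filterS (open_nbhs_nbhs (conj oU Ux)) => y Uy; exact: Dg.
Qed.

Lemma rational_on_smooth (U : set V) f : open U -> rational_on U f -> smooth_on U f.
Proof.
move=> oU rf vs x Ux; have [g rg Dg] := rational_on_iter_dir vs oU rf.
apply: (@near_eq_differentiable _ _ _ g); last exact: rational_on_differentiable rg Ux.
by apply: filterS (open_nbhs_nbhs (conj oU Ux)) => y Uy; rewrite Dg.
Qed.

Lemma gOH_rational_on X Y : rational_on (@OH2 R) (fun p => gOH p X Y).
Proof.
have -> : (fun p => gOH p X Y) = (fun p => oh2_form p X Y).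
  by apply/funext => p; exact: gOH_oh2_form.
apply: (@rational_mul _ _ _ (fun p => _)).
  by rewrite /twisted_inner; oct_unfold; solve_rational_on.
apply: rational_inv; first by oct_unfold; solve_rational_on.
by move=> p; rewrite /OH2 /= => p_in; rewrite expf_neq0 // lt0r_neq0 //; lra.
Qed.

End SmoothMetric.

Section WithinProduct.
Context {T U : topologicalType} (A : set T) (B : set U).

Lemma cvg_fst_within (z : T * U) :
  fst @ within (A `*` B) (nbhs z) --> within A (nbhs z.1).
Proof.
move=> P /= AP; have : \forall w \near z, A w.1 -> P w.1.
  by apply: (@cvg_fst _ _ (nbhs z.1) (nbhs z.2) _ _ AP); exact: nbhs_filter.
by apply: filterS => w APw [Aw _]; exact: APw.
Qed.

Lemma cvg_snd_within (z : T * U) :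
  snd @ within (A `*` B) (nbhs z) --> within B (nbhs z.2).
Proof.
move=> P /= BP; have : \forall w \near z, B w.2 -> P w.2.
  by apply: (@cvg_snd _ _ (nbhs z.1) (nbhs z.2) _ _ BP); exact: nbhs_filter.
by apply: filterS => w BPw [_ Bw]; exact: BPw.
Qed.

End WithinProduct.

Section ConvexSimplyConnected.
Context {R : realType}.
Local Notation V := 'rV[R]_16.
Local Notation I := (@unit_interval R).

Lemma segment_continuous (x y : V) : continuous (fun t : R => (1 - t) *: x + t *: y).
Proof.
move=> t; apply: cvgD; apply: cvgZ; try exact: cvg_cst; last exact: cvg_id.
by apply: cvgB; [exact: cvg_cst | exact: cvg_id].
Qed.

Lemma convex_simply_connected (S : set V) : S !=set0 ->
  (forall x y t, S x -> S y -> 0 <= t <= 1 -> S ((1 - t) *: x + t *: y)) ->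
  simply_connected S.
Proof.
move=> S0 convS; have I0 : I 0 by rewrite /unit_interval /= lexx ler01.
split=> //; split.
  move=> x y Sx Sy; exists (fun t => (1 - t) *: x + t *: y); split.
    exact/continuous_subspaceT/segment_continuous.
  split; first by move=> _ [t It <-]; exact: convS.
  by split; rewrite ?subr0 ?subrr ?scale0r ?scale1r ?addr0 ?add0r.
move=> f cf fI f01.
exists (fun w => (1 - w.2) *: f w.1 + w.2 *: f 0); split.
  apply/subspace_continuousP => z [Iz1 Iz2].
  have snd_cvg : snd @ within (I `*` I) (nbhs z) --> z.2.
    exact: cvg_trans (cvg_snd_within _ _ _) (cvg_within _).
  have fst_cvg : f \o fst @ within (I `*` I) (nbhs z) --> f z.1.
    by apply: cvg_comp (cvg_fst_within _ _ _) _; move/subspace_continuousP : cf; apply.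
  apply: cvgD; apply: cvgZ => //; last exact: cvg_cst.
  by apply: cvgB => //; exact: cvg_cst.
split; first by move=> _ [[s t] [Is It] <-]; apply: convS => //; apply: fI.
split; first by move=> s Is; rewrite /= ?subr0 ?subrr ?scale0r ?scale1r ?addr0 ?add0r.
by move=> t It; rewrite /= -f01 -scalerDl subrK scale1r.
Qed.

End ConvexSimplyConnected.

Theorem theorem8p2 (R : realType) :
  (* OH^2 is an open subset of R^16 (hence a 16-dimensional manifold) *)
  open (@OH2 R) /\
  (* which is simply connected *)
  simply_connected (@OH2 R) /\
  (* the metric coefficients g_ij = g(e_i, e_j) are smooth on OH^2 *)
  (forall i j : 'I_16, smooth_on (@OH2 R) (fun p => gOH p (ebasis R i) (ebasis R j))) /\
  (* at every point, g is a symmetric bilinear form whose quadratic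
     form is ds^2, and it is positive definite *)
  (forall p : 'rV[R]_16, @OH2 R p ->
     (forall (a : R) (X Y Z : 'rV[R]_16),
        gOH p (a *: X + Y) Z = a * gOH p X Z + gOH p Y Z) /\
     (forall X Y : 'rV[R]_16, gOH p X Y = gOH p Y X) /\
     (forall X : 'rV[R]_16, gOH p X X = ds2 p X) /\
     (forall X : 'rV[R]_16, X != 0 -> 0 < ds2 p X)).
Proof.
split; first exact: OH2_open.
split; first by apply: convex_simply_connected; [exists 0; exact: OH2_0 | exact: OH2_convex].
split=> [i j|p p_in]; first exact: rational_on_smooth OH2_open (gOH_rational_on _ _).
split; first by move=> a X Y Z; rewrite !gOH_oh2_form oh2_formZDl.
split; first by move=> X Y; rewrite !gOH_oh2_form oh2_formC.
split; first by move=> X; rewrite gOH_oh2_form ds2_oh2_form.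
by move=> X; exact: ds2_gt0.
Qed.
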